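(* Let $I$ be an open interval of $\mathbb R$, and for each positive integer $n$ let $V_n$ be the set of all complex-valued functions $f$ on $I$ having $n$ continuous derivatives and satisfying $f^{(n)}=f$ (equivalently, $V_n$ is spanned by $e^{t},e^{\omega t},\dots,e^{\omega^{n-1}t}$ where $\omega$ is a primitive $n$-th root of unity). Let $\mathcal V=\{V_n\mid n\in\mathbb Z^{+}\}$, partially ordered by $V_k\leqslant V_n$ if and only if $k$ divides $n$ (equivalently, $V_k$ is a subspace of $V_n$). Regarding $(\mathcal V,\leqslant)$ and $\mathbb Z^{+}_D$ as categories, they are equivalent.
   Context: $\mathbb Z^{+}_D$ denotes the positive integers partially ordered by divisibility ($k\leqslant n$ iff $n=kt$ for some positive integer $t$). A partially ordered set is regarded as a category with one arrow $x\to y$ exactly when $x\leqslant y$. *)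

From Stdlib Require Import Reals Arith.
From Coquelicot Require Import Coquelicot.
Open Scope R_scope.

Definition in_interval (a b : Rbar) (t : R) : Prop :=
  Rbar_lt a t /\ Rbar_lt t b.

(* f : I -> C is represented by a function R -> C that vanishes outside I.
   [has_cont_derivs_fixed a b n f] : f has n continuous derivatives on I
   (fs k is f^(k) on I) and f^(n) = f on I. *)
Definition has_cont_derivs_fixed (a b : Rbar) (n : nat) (f : R -> C) : Prop :=
  exists fs : nat -> R -> C,
    fs O = f /\
    (forall k, (k < n)%nat -> forall t, in_interval a b t ->
        is_derive (K := R_AbsRing) (V := C_R_NormedModule) (fs k) t (fs (S k) t)) /\
    (forall k, (k <= n)%nat -> forall t, in_interval a b t ->
        continuous (T := R_UniformSpace) (U := C_R_NormedModule) (fs k) t) /\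
    (forall t, in_interval a b t -> fs n t = f t).

Definition Vn (a b : Rbar) (n : nat) : (R -> C) -> Prop :=
  fun f => (forall t, ~ in_interval a b t -> f t = 0%C) /\
           has_cont_derivs_fixed a b n f.

Definition calV (a b : Rbar) : Type :=
  { S : (R -> C) -> Prop | exists n : nat, (0 < n)%nat /\ S = Vn a b n }.

Definition leV (a b : Rbar) (S T : calV a b) : Prop :=
  exists k n : nat, (0 < k)%nat /\ (0 < n)%nat /\
    proj1_sig S = Vn a b k /\ proj1_sig T = Vn a b n /\ Nat.divide k n.

Definition ZposD : Type := { n : nat | (0 < n)%nat }.
Definition leD (x y : ZposD) : Prop := Nat.divide (proj1_sig x) (proj1_sig y).

Definition partial_order {A : Type} (le : A -> A -> Prop) : Prop :=
  (forall x, le x x) /\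
  (forall x y, le x y -> le y x -> x = y) /\
  (forall x y z, le x y -> le y z -> le x z).

(* Posets regarded as (thin) categories: a functor is a monotone map;
   a natural isomorphism F ~= G consists of isomorphisms F x ~= G x
   (naturality is automatic in a thin category); an equivalence of
   categories is a pair of functors F, G with G o F ~= id and F o G ~= id. *)
Definition functor {A B : Type} (leA : A -> A -> Prop) (leB : B -> B -> Prop)
  (F : A -> B) : Prop := forall x y, leA x y -> leB (F x) (F y).

Definition nat_iso {A B : Type} (leB : B -> B -> Prop) (F G : A -> B) : Prop :=
  forall x, leB (F x) (G x) /\ leB (G x) (F x).

Definition cat_equivalent {A B : Type} (leA : A -> A -> Prop)
  (leB : B -> B -> Prop) : Prop :=
  exists (F : A -> B) (G : B -> A),
    functor leA leB F /\ functor leB leA G /\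
    nat_iso leA (fun x => G (F x)) (fun x => x) /\
    nat_iso leB (fun y => F (G y)) (fun y => y).

(* The exponential e^(w t), restricted to I, lies in V_n exactly when w^n = 1:
   its successive derivatives are forced to be w^j e^(w t), and e^(w t) never
   vanishes.  Taking for w the primitive k-th root of unity shows that
   V_k is contained in V_n only if k divides n, while k | n gives V_k <= V_n by
   reading the derivative indices modulo k.  Hence n |-> V_n is an order
   isomorphism from Z^+_D onto (cal V, <=), in particular an equivalence of
   the associated thin categories. *)
From Stdlib Require Import Reals Arith Lia Lra ZArith.
From Stdlib Require Import ClassicalDescription ProofIrrelevance IndefiniteDescription.
From Coquelicot Require Import Coquelicot.
Open Scope R_scope.

Local Notation is_deriveC := (is_derive (K := R_AbsRing) (V := C_R_NormedModule)).

Lemma partial_order_of_embedding {A B : Type} (leA : A -> A -> Prop)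
    (leB : B -> B -> Prop) (F : A -> B) :
  (forall x y, leA x y <-> leB (F x) (F y)) -> (forall x y, F x = F y -> x = y) ->
  partial_order leB -> partial_order leA.
Proof.
  intros HF Finj [Hrefl [Hanti Htrans]]. split; [|split].
  - intros x. apply HF, Hrefl.
  - intros x y Hxy Hyx. apply Finj, Hanti; apply HF; assumption.
  - intros x y z Hxy Hyz. apply HF. apply (Htrans _ (F y)); apply HF; assumption.
Qed.

Lemma cat_equivalent_of_inverse {A B : Type} (leA : A -> A -> Prop)
    (leB : B -> B -> Prop) (F : A -> B) (G : B -> A) :
  (forall x, leA x x) -> (forall y, leB y y) ->
  functor leA leB F -> functor leB leA G ->
  (forall x, G (F x) = x) -> (forall y, F (G y) = y) -> cat_equivalent leA leB.
Proof.
  intros reflA reflB HF HG GF FG. exists F, G.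
  split; [exact HF|split; [exact HG|split]]; intros z; rewrite ?GF, ?FG; auto.
Qed.

Lemma partial_order_leD : partial_order leD.
Proof.
  unfold leD. split; [|split].
  - intros x. apply Nat.divide_refl.
  - intros [m Hm] [n Hn] Hmn Hnm. simpl in *.
    assert (m = n) by (apply Nat.divide_antisym; assumption). subst n.
    f_equal. apply Peano_dec.le_unique.
  - intros x y z. apply Nat.divide_trans.
Qed.

Lemma is_deriveC_fst (F : R -> C) t (l : C) :
  is_deriveC F t l -> is_derive (fun u => fst (F u)) t (fst l).
Proof.
  intros H.
  apply (filterdiff_comp' F (fun p : C_R_NormedModule => fst p) t _
           (fun p : C_R_NormedModule => fst p) H).
  apply filterdiff_linear, (is_linear_fst (U := R_NormedModule) (V := R_NormedModule)).
Qed.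

Lemma is_deriveC_snd (F : R -> C) t (l : C) :
  is_deriveC F t l -> is_derive (fun u => snd (F u)) t (snd l).
Proof.
  intros H.
  apply (filterdiff_comp' F (fun p : C_R_NormedModule => snd p) t _
           (fun p : C_R_NormedModule => snd p) H).
  apply filterdiff_linear, (is_linear_snd (U := R_NormedModule) (V := R_NormedModule)).
Qed.

Lemma is_deriveC_pair (f g : R -> R) t l1 l2 :
  is_derive f t l1 -> is_derive g t l2 ->
  is_deriveC (fun u => (f u, g u) : C) t (l1, l2).
Proof.
  intros H1 H2.
  apply (filterdiff_comp_2 (K := R_AbsRing) (T := R_NormedModule) (U := R_NormedModule)
     (V := R_NormedModule) (W := C_R_NormedModule) f g (fun x y => (x, y) : C)
     _ _ (fun x y => (x, y) : C) H1 H2).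
  apply (filterdiff_linear (U := prod_NormedModule _ R_NormedModule R_NormedModule)
     (V := C_R_NormedModule) (fun p : R * R => (fst p, snd p) : C)).
  split.
  - intros [] []; reflexivity.
  - intros k []; reflexivity.
  - exists 1. split; [lra|]. intros [x y]. rewrite Rmult_1_l. apply Rle_refl.
Qed.

Lemma is_deriveC_unique (F : R -> C) t (l l' : C) :
  is_deriveC F t l -> is_deriveC F t l' -> l = l'.
Proof.
  intros H H'. destruct l as [l1 l2], l' as [m1 m2].
  pose proof (is_derive_unique _ _ _ (is_deriveC_fst _ _ _ H)) as E1.
  pose proof (is_derive_unique _ _ _ (is_deriveC_fst _ _ _ H')) as E1'.
  pose proof (is_derive_unique _ _ _ (is_deriveC_snd _ _ _ H)) as E2.
  pose proof (is_derive_unique _ _ _ (is_deriveC_snd _ _ _ H')) as E2'.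
  simpl in *. congruence.
Qed.

Lemma is_deriveC_Cmult_l (F : R -> C) t (l c : C) :
  is_deriveC F t l -> is_deriveC (fun u => Cmult c (F u)) t (Cmult c l).
Proof.
  intros H. pose proof (is_deriveC_fst _ _ _ H) as H1. pose proof (is_deriveC_snd _ _ _ H) as H2.
  destruct c as [c1 c2], l as [l1 l2]. simpl in *. unfold Cmult at 2; simpl.
  apply (is_derive_ext (fun u =>
           (c1 * fst (F u) - c2 * snd (F u), c1 * snd (F u) + c2 * fst (F u)) : C)).
  { intros u. unfold Cmult. destruct (F u); reflexivity. }
  apply is_deriveC_pair.
  - apply (is_derive_minus (fun u => c1 * fst (F u)) (fun u => c2 * snd (F u)));
      apply is_derive_scal; assumption.
  - apply (is_derive_plus (fun u => c1 * snd (F u)) (fun u => c2 * fst (F u)));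
      apply is_derive_scal; assumption.
Qed.

Definition expw (w : C) (t : R) : C :=
  (exp (fst w * t) * cos (snd w * t), exp (fst w * t) * sin (snd w * t)).

Lemma is_deriveC_expw w t : is_deriveC (expw w) t (Cmult w (expw w t)).
Proof.
  destruct w as [c s]. unfold expw, Cmult; simpl.
  apply is_deriveC_pair; auto_derive; auto; ring.
Qed.

Lemma is_deriveC_Cpow_expw w j t :
  is_deriveC (fun u => Cmult (Cpow w j) (expw w u)) t (Cmult (Cpow w (S j)) (expw w t)).
Proof.
  replace (Cmult (Cpow w (S j)) (expw w t)) with (Cmult (Cpow w j) (Cmult w (expw w t))).
  - apply is_deriveC_Cmult_l, is_deriveC_expw.
  - rewrite Cpow_S, !Cmult_assoc, (Cmult_comm w). reflexivity.
Qed.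

Lemma expw_neq0 w t : expw w t <> 0%C.
Proof.
  unfold expw. intros H. injection H as H1 H2.
  pose proof (exp_pos (fst w * t)).
  pose proof (sin2_cos2 (snd w * t)) as Hsc. unfold Rsqr in Hsc.
  apply Rmult_integral in H1 as [H1|H1]; [lra|].
  apply Rmult_integral in H2 as [H2|H2]; [lra|].
  rewrite H1, H2 in Hsc. lra.
Qed.

Lemma Cpow_polar th n : Cpow (cos th, sin th) n = (cos (INR n * th), sin (INR n * th)).
Proof.
  induction n as [|n IH].
  - simpl. rewrite Rmult_0_l, cos_0, sin_0. reflexivity.
  - rewrite Cpow_S, IH, S_INR.
    replace ((INR n + 1) * th) with (th + INR n * th) by ring.
    rewrite cos_plus, sin_plus. unfold Cmult; simpl. f_equal; ring.
Qed.

Definition unit_root (k : nat) : C := (cos (2 * PI / INR k), sin (2 * PI / INR k)).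

Lemma Cpow_unit_root_self k : (0 < k)%nat -> Cpow (unit_root k) k = 1%C.
Proof.
  intros Hk. unfold unit_root. rewrite Cpow_polar.
  assert (INR k <> 0) by (apply not_0_INR; lia).
  replace (INR k * (2 * PI / INR k)) with (2 * PI) by (field; auto).
  rewrite cos_2PI, sin_2PI. reflexivity.
Qed.

Lemma Cpow_unit_root_eq1 k n : (0 < k)%nat -> Cpow (unit_root k) n = 1%C -> Nat.divide k n.
Proof.
  intros Hk H. unfold unit_root in H. rewrite Cpow_polar in H. injection H as Hcos _.
  assert (Kpos : 0 < INR k) by (apply lt_0_INR; lia).
  pose proof PI_RGT_0.
  set (th := PI * INR n / INR k).
  replace (INR n * (2 * PI / INR k)) with (2 * th) in Hcos by (unfold th; field; lra).
  rewrite cos_2a_sin in Hcos.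
  assert (Hsin : sin th = 0).
  { assert (sin th * sin th = 0) as Hsq by lra. apply Rmult_integral in Hsq. tauto. }
  destruct (sin_eq_0_0 _ Hsin) as [m Hm].
  assert (Hn : INR n = IZR m * INR k).
  { apply (Rmult_eq_reg_l (PI / INR k)); [|apply Rgt_not_eq, Rdiv_lt_0_compat; lra].
    replace (PI / INR k * INR n) with th by (unfold th; field; lra).
    rewrite Hm. field; lra. }
  rewrite !INR_IZR_INZ, <- mult_IZR in Hn. apply eq_IZR in Hn.
  exists (Z.to_nat m). apply Nat2Z.inj. rewrite Nat2Z.inj_mul, Z2Nat.id; nia.
Qed.

Lemma in_interval_locally a b t : in_interval a b t -> locally t (in_interval a b).
Proof.
  intros [Ha Hb]. exact (filter_and _ _ (open_Rbar_gt a t Ha) (open_Rbar_lt b t Hb)).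
Qed.

Lemma in_interval_exists a b : Rbar_lt a b -> exists t, in_interval a b t.
Proof.
  unfold in_interval. destruct a as [a| |], b as [b| |]; simpl; intros H; try contradiction.
  - exists ((a + b) / 2). simpl. lra.
  - exists (a + 1). simpl. lra.
  - exists (b - 1). simpl. lra.
  - exists 0. simpl. auto.
Qed.

Lemma mod_succ_cases k m : k <> O ->
  ((S (m mod k) < k)%nat /\ (S m) mod k = S (m mod k)) \/
  (S (m mod k) = k /\ (S m) mod k = O).
Proof.
  intros Hk. pose proof (Nat.div_mod m k Hk). pose proof (Nat.mod_upper_bound m k Hk).
  destruct (Nat.eq_dec (S (m mod k)) k) as [Hs|Hs].
  - right. split; auto. symmetry. apply (Nat.mod_unique _ _ (S (m / k))); lia.
  - left. split; [lia|]. symmetry. apply (Nat.mod_unique _ _ (m / k)); lia.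
Qed.

Lemma Vn_divide_incl a b k n f : (0 < k)%nat -> Nat.divide k n -> Vn a b k f -> Vn a b n f.
Proof.
  intros Hk Hkn [Hout [fs [H0 [Hder [Hcont Hk_fix]]]]]. split; [exact Hout|].
  assert (Hk0 : k <> O) by lia.
  pose proof (fun m => Nat.mod_upper_bound m k Hk0) as Hlt.
  (* f^(m) := f^(m mod k); the wrap-around step uses f^(k) = f *)
  exists (fun m => fs (m mod k)). split; [|split; [|split]].
  - simpl. rewrite Nat.Div0.mod_0_l. exact H0.
  - intros m _ t Ht. destruct (mod_succ_cases k m Hk0) as [[Hs Hm]|[Hs Hm]]; rewrite Hm.
    + apply Hder; auto.
    + pose proof (Hder _ (Hlt m) t Ht) as D.
      rewrite Hs, Hk_fix in D by exact Ht. rewrite H0. exact D.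
  - intros m _ t Ht. apply Hcont; auto. pose proof (Hlt m); lia.
  - intros t Ht. destruct Hkn as [q ->]. rewrite Nat.Div0.mod_mul, H0. reflexivity.
Qed.

Definition expw_on (a b : Rbar) (w : C) (t : R) : C :=
  if excluded_middle_informative (in_interval a b t) then expw w t else 0%C.

Lemma expw_on_in a b w t : in_interval a b t -> expw_on a b w t = expw w t.
Proof. intros Ht. unfold expw_on. destruct (excluded_middle_informative _); tauto. Qed.

Lemma expw_on_locally a b w t :
  in_interval a b t -> locally t (fun u => expw w u = expw_on a b w u).
Proof.
  intros Ht. apply (filter_imp (in_interval a b)); [|apply in_interval_locally; auto].
  intros u Hu. symmetry. apply expw_on_in, Hu.
Qed.

Lemma expw_on_Vn a b w k : Cpow w k = 1%C -> Vn a b k (expw_on a b w).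
Proof.
  intros Hwk. split.
  { intros t Ht. unfold expw_on. destruct (excluded_middle_informative _); tauto. }
  exists (fun j => match j with
                   | O => expw_on a b w
                   | S _ => fun t => Cmult (Cpow w j) (expw w t) end).
  split; [reflexivity|split; [|split]].
  - intros [|j] _ t Ht.
    + apply (is_derive_ext_loc (expw w)); [apply expw_on_locally; auto|].
      simpl. rewrite Cmult_1_r. apply is_deriveC_expw.
    + apply is_deriveC_Cpow_expw.
  - intros [|j] _ t Ht.
    + apply (continuous_ext_loc (T := R_UniformSpace) (U := C_R_NormedModule)
               (expw_on a b w) (expw w)); [apply expw_on_locally; auto|].
      apply (ex_derive_continuous (K := R_AbsRing) (V := C_R_NormedModule)).
      eexists. apply is_deriveC_expw.
    + apply (ex_derive_continuous (K := R_AbsRing) (V := C_R_NormedModule)).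
      eexists. apply is_deriveC_Cpow_expw.
  - intros t Ht. destruct k as [|k]; [reflexivity|].
    rewrite Hwk, Cmult_1_l, expw_on_in; auto.
Qed.

Lemma Vn_expw_on_Cpow a b w n t0 :
  in_interval a b t0 -> Vn a b n (expw_on a b w) -> Cpow w n = 1%C.
Proof.
  intros Ht0 [_ [fs [H0 [Hder [_ Hn_fix]]]]].
  assert (Hfs : forall j, (j <= n)%nat -> forall t, in_interval a b t ->
            fs j t = Cmult (Cpow w j) (expw w t)).
  { induction j as [|j IH]; intros Hj t Ht.
    - rewrite H0, expw_on_in by exact Ht. simpl. rewrite Cmult_1_l. reflexivity.
    - apply (is_deriveC_unique (fs j) t); [apply Hder; [lia|exact Ht]|].
      apply (is_derive_ext_loc (fun u => Cmult (Cpow w j) (expw w u))).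
      + apply (filter_imp (in_interval a b)); [|apply in_interval_locally; auto].
        intros u Hu. symmetry. apply IH; [lia|exact Hu].
      + apply is_deriveC_Cpow_expw. }
  pose proof (Hfs n (le_n n) t0 Ht0) as Heq.
  rewrite Hn_fix, expw_on_in in Heq by exact Ht0.
  pose proof (expw_neq0 w t0) as Hnz.
  apply (f_equal (fun z => Cmult z (Cinv (expw w t0)))) in Heq.
  rewrite <- Cmult_assoc, Cinv_r, Cmult_1_r in Heq by exact Hnz. symmetry. exact Heq.
Qed.

Lemma Vn_incl_divide a b k n : Rbar_lt a b -> (0 < k)%nat ->
  (forall f, Vn a b k f -> Vn a b n f) -> Nat.divide k n.
Proof.
  intros Hab Hk Hincl. destruct (in_interval_exists a b Hab) as [t0 Ht0].
  apply Cpow_unit_root_eq1; auto.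
  apply (Vn_expw_on_Cpow a b _ n t0 Ht0), Hincl, expw_on_Vn, Cpow_unit_root_self, Hk.
Qed.

Lemma Vn_inj a b k n : Rbar_lt a b -> (0 < k)%nat -> (0 < n)%nat ->
  Vn a b k = Vn a b n -> k = n.
Proof.
  intros Hab Hk Hn Heq. apply Nat.divide_antisym; apply (Vn_incl_divide a b); auto;
    rewrite Heq; auto.
Qed.

Section CalV.

Variables (a b : Rbar).
Hypothesis hab : Rbar_lt a b.

Definition Vindex_sig (x : calV a b) :
  { n : nat | (0 < n)%nat /\ proj1_sig x = Vn a b n } :=
  constructive_indefinite_description _ (proj2_sig x).

Definition Vindex (x : calV a b) : ZposD :=
  exist _ (proj1_sig (Vindex_sig x)) (proj1 (proj2_sig (Vindex_sig x))).

Definition Vof (n : ZposD) : calV a b :=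
  exist _ (Vn a b (proj1_sig n)) (ex_intro _ (proj1_sig n) (conj (proj2_sig n) eq_refl)).

Lemma Vn_Vindex (x : calV a b) : proj1_sig x = Vn a b (proj1_sig (Vindex x)).
Proof. exact (proj2 (proj2_sig (Vindex_sig x))). Qed.

Lemma Vof_Vindex (x : calV a b) : Vof (Vindex x) = x.
Proof.
  destruct x as [S HS]. unfold Vof. simpl.
  apply eq_sig_hprop; [intros; apply proof_irrelevance|].
  symmetry. exact (Vn_Vindex (exist _ S HS)).
Qed.

Lemma Vindex_Vof (n : ZposD) : Vindex (Vof n) = n.
Proof.
  apply eq_sig_hprop; [intros; apply Peano_dec.le_unique|].
  apply (Vn_inj a b); [exact hab|apply (proj2_sig (Vindex _))|apply (proj2_sig n)|].
  symmetry. exact (Vn_Vindex (Vof n)).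
Qed.

Lemma leV_Vindex (x y : calV a b) : leV a b x y <-> leD (Vindex x) (Vindex y).
Proof.
  unfold leD. split.
  - intros [k [n [Hk [Hn [Hx [Hy Hkn]]]]]].
    rewrite (Vn_inj a b _ k hab (proj2_sig (Vindex x)) Hk) by (rewrite <- Vn_Vindex; auto).
    rewrite (Vn_inj a b _ n hab (proj2_sig (Vindex y)) Hn) by (rewrite <- Vn_Vindex; auto).
    exact Hkn.
  - intros Hdiv. exists (proj1_sig (Vindex x)), (proj1_sig (Vindex y)).
    repeat split; auto using Vn_Vindex; apply proj2_sig.
Qed.

Lemma Vindex_inj (x y : calV a b) : Vindex x = Vindex y -> x = y.
Proof. intros H. rewrite <- (Vof_Vindex x), <- (Vof_Vindex y), H. reflexivity. Qed.

End CalV.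

Theorem mainTheorem5 (a b : Rbar) (hab : Rbar_lt a b) :
  partial_order (leV a b) /\ cat_equivalent (leV a b) leD.
Proof.
  pose proof partial_order_leD as HD.
  assert (HV : partial_order (leV a b)).
  { apply (partial_order_of_embedding _ leD (Vindex a b)); auto.
    - intros x y. apply leV_Vindex, hab.
    - apply Vindex_inj. }
  split; [exact HV|].
  apply (cat_equivalent_of_inverse _ _ (Vindex a b) (Vof a b)).
  - apply (proj1 HV).
  - apply (proj1 HD).
  - intros x y. apply leV_Vindex, hab.
  - intros m n Hmn. apply leV_Vindex; [exact hab|]. rewrite !Vindex_Vof; auto.
  - apply Vof_Vindex.
  - apply Vindex_Vof, hab.
Qed.
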